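(* Let $\Lambda\subset\mathbb{R}^2$ be a $2$-dimensional lattice and let $C\subset\mathbb{R}^2$ be a convex body that is lattice reduced or lattice complete with respect to $\Lambda$. Then $\mathrm{diam}_\Lambda(C)\le\mathrm{wdt}_\Lambda(C)$.
   Context: A lattice $\Lambda\subset\mathbb{R}^2$ is a discrete subgroup spanning $\mathbb{R}^2$; $\Lambda^\star=\{y: x\cdot y\in\mathbb{Z}\ \forall x\in\Lambda\}$. For a convex body $C$ (compact convex, non-empty interior): $\mathrm{wdt}_\Lambda(C)=\min_{y\in\Lambda^\star\setminus\{0\}}\max_{a,b\in C}y\cdot(a-b)$; a segment $[a,b]$ is a lattice segment if $b-a$ is parallel to a nonzero vector of $\Lambda$, with lattice length $|b-a|/|v|$ where $v$ generates $\Lambda\cap\mathrm{span}\{b-a\}$ and is a positive multiple of $b-a$; $\mathrm{diam}_\Lambda(C)$ is the maximum lattice length of a lattice segment in $C$. $C$ is lattice reduced if no convex body $C'\subsetneq C$ has the same lattice width, lattice complete if no convex body $C'\supsetneq C$ has the same lattice diameter. *)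

From HB Require Import structures.
From mathcomp Require Import all_boot all_order all_algebra.
From mathcomp Require Import all_classical all_reals topology normedtype.
Import numFieldNormedType.Exports.
Set Implicit Arguments. Unset Strict Implicit. Unset Printing Implicit Defensive.
Import Order.TTheory GRing.Theory Num.Theory.
Local Open Scope classical_set_scope.
Local Open Scope ring_scope.

Section Defs.
Variable R : realType.
Notation pt := (R * R)%type.

Definition dot (u v : pt) : R := u.1 * v.1 + u.2 * v.2.
Definition scl (t : R) (u : pt) : pt := (t * u.1, t * u.2).

Definition enorm (u : pt) : R := Num.sqrt (dot u u).

Definition is_lattice (L : set pt) : Prop :=
  [/\ L 0,
      (forall x y, L x -> L y -> L (x - y)),
      (exists2 e : R, 0 < e & forall x, L x -> enorm x < e -> x = 0) &
      (exists u v, [/\ L u, L v & u.1 * v.2 - u.2 * v.1 != 0])].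

Definition dual_lattice (L : set pt) : set pt :=
  [set y | forall x, L x -> exists k : int, dot x y = k%:~R].

Definition convex2 (C : set pt) : Prop :=
  forall a b (t : R), C a -> C b -> 0 <= t <= 1 -> C (a + scl t (b - a)).

Definition convex_body (C : set pt) : Prop :=
  [/\ compact C, convex2 C & (C°) !=set0].

Definition dir_width (y : pt) (C : set pt) : R :=
  sup [set dot y (a - b) | a in C & b in C].

Definition lattice_width (L C : set pt) : R :=
  inf [set dir_width y C | y in [set y | dual_lattice L y /\ y <> 0]].

(* v is the generator of L ∩ span{w} that is a positive multiple of w *)
Definition prim_gen (L : set pt) (w v : pt) : Prop :=
  [/\ L v, v <> 0, (exists2 t : R, 0 < t & v = scl t w) &
      (forall z, L z -> (exists s : R, z = scl s w) -> exists k : int, z = scl k%:~R v)].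

Definition lattice_segment (L : set pt) (a b : pt) (l : R) : Prop :=
  a != b /\ exists v, prim_gen L (b - a) v /\ l = enorm (b - a) / enorm v.

Definition seg_in (C : set pt) (a b : pt) : Prop :=
  forall t : R, 0 <= t <= 1 -> C (a + scl t (b - a)).

Definition lattice_diam (L C : set pt) : R :=
  sup [set l | exists a b, seg_in C a b /\ lattice_segment L a b l].

Definition lattice_reduced (L C : set pt) : Prop :=
  ~ exists C', [/\ convex_body C', C' `<` C & lattice_width L C' = lattice_width L C].

Definition lattice_complete (L C : set pt) : Prop :=
  ~ exists C', [/\ convex_body C', C `<` C' & lattice_diam L C' = lattice_diam L C].

End Defs.

From HB Require Import structures.
From mathcomp Require Import all_boot all_order all_algebra.
From mathcomp Require Import all_classical all_reals topology normedtype.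
From mathcomp Require Import lra zify ring.
Import numFieldNormedType.Exports.
Import Order.TTheory GRing.Theory Num.Theory.
Local Open Scope classical_set_scope.
Local Open Scope ring_scope.
Set Implicit Arguments. Unset Strict Implicit. Unset Printing Implicit Defensive.

(* Suppose diam(C) > wdt(C).  Then C contains a lattice segment [a, b] of lattice
   length l > wdt(C), with primitive direction v, and some nonzero dual vector y
   has width w_y(C) < l; as y.(b - a) = l (y.v) with y.v an integer, y is
   orthogonal to v.  Let p and q be points of C maximising and minimising y.

   If C is reduced, cut off one end of [a, b] by a half-plane whose boundary is
   parallel to pq.  The smaller body still contains p and q, so its width in the
   directions parallel to y is unchanged, and still contains a subsegment of
   lattice length > wdt(C), so its width in every other dual direction exceeds
   wdt(C): its lattice width is wdt(C), a contradiction.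

   If C is complete, every chord c of C orthogonal to y satisfies
   v.c <= diam(C) |v|^2, and a separation argument for the convex set of pairs
   (y.c, v.c - diam(C) |v|^2) gives k with v.c - k y.c <= diam(C) |v|^2 for all
   chords c.  The Minkowski sum of C with a short segment [0, e], where
   v.e = k y.e and 0 < y.e < diam(C) - w_y(C), is strictly larger than C and has
   the same lattice diameter: its chords parallel to v obey the same bound, and
   the other lattice segments in it have lattice length at most
   |y.(b - a)| <= w_y(C) + y.e < diam(C). *)

Section Plane.
Variable R : realType.
Notation pt := (R * R)%type.
Implicit Types (a b c n p q u v w x y z : pt) (C : set pt).

Lemma pt_ext u w : u.1 = w.1 -> u.2 = w.2 -> u = w.
Proof. by case: u w => ? ? [? ?] /= -> ->. Qed.

Lemma dotC u w : dot u w = dot w u.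
Proof. by rewrite /dot mulrC [u.2 * _]mulrC. Qed.

Lemma dotDr n a b : dot n (a + b) = dot n a + dot n b.
Proof. by rewrite /dot /=; ring. Qed.

Lemma dotNr n a : dot n (- a) = - dot n a.
Proof. by rewrite /dot /=; ring. Qed.

Lemma dotBr n a b : dot n (a - b) = dot n a - dot n b.
Proof. by rewrite dotDr dotNr. Qed.

Lemma dotZr n t a : dot n (scl t a) = t * dot n a.
Proof. by rewrite /dot /scl /=; ring. Qed.

Lemma dotZl n t a : dot (scl t n) a = t * dot n a.
Proof. by rewrite dotC dotZr dotC. Qed.

Lemma dotNl n a : dot (- n) a = - dot n a.
Proof. by rewrite dotC dotNr dotC. Qed.

Lemma dot_gt0 u : u <> 0 -> 0 < dot u u.
Proof.
move=> u0; rewrite lt_def /dot addr_ge0 -?expr2 ?sqr_ge0 // andbT.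
apply: contra_notN u0; rewrite paddr_eq0 -?expr2 ?sqr_ge0 // !sqrf_eq0.
by case/andP => /eqP u1 /eqP u2; apply: pt_ext.
Qed.

Lemma enormZ t u : 0 <= t -> enorm (scl t u) = t * enorm u.
Proof.
move=> t0; rewrite /enorm dotZl dotZr mulrA -expr2.
by rewrite sqrtrM ?sqr_ge0 // sqrtr_sqr ger0_norm.
Qed.

Lemma enorm_gt0 u : u <> 0 -> 0 < enorm u.
Proof. by move/dot_gt0; rewrite sqrtr_gt0. Qed.

Lemma enorm_le_l1 z : enorm z <= `|z.1| + `|z.2|.
Proof.
rewrite /enorm /dot -[leRHS]ger0_norm ?addr_ge0 // -sqrtr_sqr ler_wsqrtr //.
rewrite -!expr2 -(ger0_norm (sqr_ge0 z.1)) -(ger0_norm (sqr_ge0 z.2)) !normrX sqrrD.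
by have := mulr_ge0 (normr_ge0 z.1) (normr_ge0 z.2); lra.
Qed.

Lemma perp_colinear n x w : n <> 0 -> dot n x = 0 -> dot n w = 0 -> w <> 0 ->
  x = scl (dot w x / dot w w) w.
Proof.
move=> n0 nx nw w0.
have det0 : x.1 * w.2 - x.2 * w.1 = 0.
  have e1 : n.1 * (x.1 * w.2 - x.2 * w.1) = w.2 * dot n x - x.2 * dot n w.
    by rewrite /dot; ring.
  have e2 : n.2 * (x.1 * w.2 - x.2 * w.1) = x.1 * dot n w - w.1 * dot n x.
    by rewrite /dot; ring.
  rewrite nx nw !mulr0 subrr in e1 e2.
  apply/eqP; apply: contra_notT n0 => d0.
  by apply: pt_ext; apply/eqP; rewrite -(mulIr_eq0 _ (mulIf d0)) ?e1 ?e2.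
have ww := lt0r_neq0 (dot_gt0 w0).
apply: pt_ext; rewrite /scl /=; apply: (mulIf ww); rewrite mulrAC divfK //.
- apply/eqP; rewrite -subr_eq0; apply/eqP.
  transitivity (w.2 * (x.1 * w.2 - x.2 * w.1)); first by rewrite /dot; ring.
  by rewrite det0 mulr0.
- apply/eqP; rewrite -subr_eq0; apply/eqP.
  transitivity (- w.1 * (x.1 * w.2 - x.2 * w.1)); first by rewrite /dot; ring.
  by rewrite det0 mulr0.
Qed.

Lemma seg_in_ends C a b : seg_in C a b -> C a /\ C b.
Proof.
move=> h; split.
  by have := h 0; rewrite lexx ler01 /scl /= !mul0r addrC -[(0, 0)]/(0 : pt) add0r; apply.
by have := h 1; rewrite lexx ler01 /scl /= !mul1r -[(_, _)]/(b - a) addrC subrK; apply.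
Qed.

Lemma seg_in_sym C a b : seg_in C a b -> seg_in C b a.
Proof.
move=> h t /andP [t0 t1]; rewrite (_ : _ + _ = a + scl (1 - t) (b - a)).
  by apply: h; rewrite subr_ge0 t1 lerBlDr lerDl.
by apply: pt_ext; rewrite /scl /=; ring.
Qed.

Lemma dot_continuous n : continuous (dot n).
Proof.
by move=> x; apply: cvgD; apply: cvgMl_tmp; [exact: cvg_fst | exact: cvg_snd].
Qed.

Lemma nbhs_ptP z (A : set pt) : nbhs z A <->
  exists2 r : R, 0 < r & forall w, `|w.1 - z.1| < r -> `|w.2 - z.2| < r -> A w.
Proof.
split.
  move=> /nbhs_ballP [r r0 H]; exists r => // w h1 h2; apply: H.
  by split => /=; rewrite -ball_normE /= distrC.
move=> [r r0 H]; apply/nbhs_ballP; exists r => // w [h1 h2]; apply: H.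
  by move: h1; rewrite -ball_normE /= distrC.
by move: h2; rewrite -ball_normE /= distrC.
Qed.

Lemma sup_attained (S : set R) m : S m -> ubound S m -> sup S = m.
Proof.
move=> Sm ubm; apply/le_anti; rewrite ge_sup //=; last by exists m.
by rewrite (sup_upper_bound _ Sm) //; split; exists m.
Qed.

Lemma dot_argmax y C : compact C -> C !=set0 ->
  exists2 p, C p & forall x, C x -> dot y x <= dot y p.
Proof.
move=> cC [c Cc].
have cA : compact (dot y @` C).
  by apply: continuous_compact => //; apply: continuous_subspaceT; exact: dot_continuous.
have A0 : dot y @` C !=set0 by exists (dot y c), c.
have [p Cp pE] : (dot y @` C) (sup (dot y @` C)).
  apply: (compact_closed (@Rhausdorff R) cA); apply: closure_sup => //.
  by case: (compact_has_sup A0 cA).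
exists p => // x Cx; rewrite pE; apply: sup_upper_bound; last by exists x.
exact: compact_has_sup.
Qed.

Lemma dot_argmin y C : compact C -> C !=set0 ->
  exists2 q, C q & forall x, C x -> dot y q <= dot y x.
Proof.
move=> cC C0; have [q Cq hq] := dot_argmax (- y) cC C0.
by exists q => // x /hq; rewrite !dotNl lerN2.
Qed.

Lemma dir_width_sclE y C p q (mu : R) : C p -> C q ->
    (forall x, C x -> dot y q <= dot y x <= dot y p) ->
  dir_width (scl mu y) C = `|mu| * dot y (p - q).
Proof.
move=> Cp Cq ext; apply: sup_attained.
  have [mu0|mu0] := leP 0 mu.
    by exists p => //; exists q => //; rewrite dotZl ger0_norm.
  by exists q => //; exists p => //; rewrite dotZl ltr0_norm // !dotBr; ring.
move=> _ [a Ca [b Cb <-]]; rewrite dotZl (le_trans (ler_norm _)) // normrM.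
rewrite ler_wpM2l // ler_norml !dotBr.
by have := ext a Ca; have := ext b Cb => /andP [? ?] /andP [? ?]; apply/andP; split; lra.
Qed.

Lemma dir_width_extremes y C p q : C p -> C q ->
    (forall x, C x -> dot y q <= dot y x <= dot y p) ->
  dir_width y C = dot y (p - q).
Proof.
move=> Cp Cq ext; have := dir_width_sclE 1 Cp Cq ext; rewrite normr1 mul1r.
by have -> : scl 1 y = y by apply: pt_ext; rewrite /scl /= mul1r.
Qed.

Lemma dot_extremes y C : compact C -> C !=set0 -> exists p q,
  [/\ C p, C q & forall x, C x -> dot y q <= dot y x <= dot y p].
Proof.
move=> cC C0; have [p Cp hp] := dot_argmax y cC C0; have [q Cq hq] := dot_argmin y cC C0.
by exists p, q; split => // x Cx; rewrite hp ?hq.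
Qed.

Lemma dir_width_ub y C a b : compact C -> C a -> C b -> dot y (a - b) <= dir_width y C.
Proof.
move=> cC Ca Cb; have [p [q [Cp Cq ext]]] := dot_extremes y cC (ex_intro _ a Ca).
rewrite (dir_width_extremes Cp Cq ext) !dotBr.
by have := ext a Ca; have := ext b Cb => /andP [? ?] /andP [? ?]; lra.
Qed.

Lemma dir_width_norm y C a b : compact C -> C a -> C b -> `|dot y (b - a)| <= dir_width y C.
Proof.
move=> cC Ca Cb; rewrite ler_norml dir_width_ub // andbT lerNl.
by rewrite -dotNr opprB dir_width_ub.
Qed.

Lemma dir_width_ge0 y C : compact C -> C !=set0 -> 0 <= dir_width y C.
Proof.
move=> cC [c Cc]; apply: le_trans (dir_width_ub y cC Cc Cc).
by rewrite subrr /dot /= !mulr0 addr0.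
Qed.

Lemma dir_width_lub y C r : C !=set0 ->
  (forall a b, C a -> C b -> dot y (a - b) <= r) -> dir_width y C <= r.
Proof.
move=> [c Cc] H; apply: ge_sup; first by exists (dot y (c - c)), c => //; exists c.
by move=> _ [a Ca [b Cb <-]]; apply: H.
Qed.

Lemma dir_width_subset y C C' : compact C -> C' `<=` C -> C' !=set0 ->
  dir_width y C' <= dir_width y C.
Proof.
by move=> cC sC' C'0; apply: dir_width_lub => // a b /sC' Ca /sC' Cb; exact: dir_width_ub.
Qed.

Lemma intr_norm_ge1 (k : int) : k != 0 -> 1 <= `|k%:~R : R|.
Proof. by move=> k0; rewrite norm_intr_ge1 ?intr_int ?intr_eq0. Qed.

Lemma dirichlet_simultaneous (al be : R) (m : nat) : exists n : nat, exists c1 c2 : int,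
  [/\ (0 < n <= m.+1 * m.+1)%N, `|n%:R * al - c1%:~R| < m.+1%:R^-1
    & `|n%:R * be - c2%:~R| < m.+1%:R^-1].
Proof.
set M : R := m.+1%:R.
have M0 : 0 < M by rewrite ltr0n.
pose fr (r : R) := r - (Num.floor r)%:~R.
have fr_itv r : 0 <= M * fr r < M.
  have := floor_le r; have := floorD1_gt r; rewrite rmorphD /= rmorph1 => h1 h2.
  apply/andP; split; first by rewrite mulr_ge0 ?(ltW M0) // subr_ge0.
  by rewrite -[ltRHS]mulr1 ltr_pM2l // /fr; lra.
pose box r : 'I_m.+1 := inord (Num.truncn (M * fr r)).
have box_close r1 r2 : box r1 = box r2 -> `|fr r1 - fr r2| < M^-1.
  have [t1l t1r] := andP (fr_itv r1); have [t2l t2r] := andP (fr_itv r2).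
  move=> /(congr1 val) /=; rewrite !inordK ?truncn_lt_nat // => teq.
  have := truncn_itv t1l; have := truncn_itv t2l; rewrite teq -!natr1.
  move=> /andP [? ?] /andP [? ?].
  rewrite -(ltr_pM2l M0) mulfV ?gt_eqF // -[X in X * `|_|](gtr0_norm M0) -normrM.
  by rewrite mulrBr ltr_norml; apply/andP; split; lra.
(* pigeonhole: (m+1)^2 + 1 multiples of (al, be), (m+1)^2 boxes in the unit square *)
pose g (k : 'I_(m.+1 * m.+1).+1) := (box (k%:R * al), box (k%:R * be)).
have [k1 [k2 [lt12 [/box_close close_al /box_close close_be]]]] :
    exists k1 k2 : 'I_(m.+1 * m.+1).+1, (k1 < k2)%N /\ g k1 = g k2.
  have : ~~ injectiveb g.
    by apply/negP => /injectiveP/leq_card; rewrite card_prod !card_ord ltnn.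
  move/injectivePn => [k1 [k2 k12 gk]].
  case: (ltngtP k1 k2) => [lt|lt|/val_inj eq12]; [by exists k1, k2 | by exists k2, k1 |].
  by rewrite eq12 eqxx in k12.
exists (k2 - k1)%N, (Num.floor (k2%:R * al) - Num.floor (k1%:R * al)).
exists (Num.floor (k2%:R * be) - Num.floor (k1%:R * be)).
have nE : ((k2 - k1)%N%:R : R) = k2%:R - k1%:R by rewrite natrB // ltnW.
split; first by have := ltn_ord k2; lia.
- by rewrite nE distrC rmorphB /=; move: close_al; rewrite /fr; congr (`|_| < _); ring.
- by rewrite nE distrC rmorphB /=; move: close_be; rewrite /fr; congr (`|_| < _); ring.
Qed.

Lemma convex_body_neq0 C : convex_body C -> C !=set0.
Proof. by case=> _ _ [z /interior_subset Cz]; exists z. Qed.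

Lemma nbhs_convex_shrink C z z0 (lam : R) : convex2 C -> nbhs z C -> C z0 ->
  0 < lam <= 1 -> nbhs (z0 + scl lam (z - z0)) C.
Proof.
move=> cv /nbhs_ptP [r r0 hr] Cz0 /andP [l0 l1]; apply/nbhs_ptP.
exists (lam * r) => [|w' h1 h2]; first by rewrite mulr_gt0.
set w := z0 + scl lam (z - z0) in h1 h2.
have lam_neq0 : lam != 0 by rewrite gt_eqF.
set z' := z + scl lam^-1 (w' - w).
have -> : w' = z0 + scl lam (z' - z0) by apply: pt_ext; rewrite /z' /w /scl /=; field.
apply: cv => //; last by rewrite l1 ltW.
by apply: hr; rewrite /z' /scl /= addrAC subrr add0r normrM gtr0_norm ?invr_gt0 //
  ltr_pdivrMl.
Qed.

Lemma halfplane_body C n (g : R) z0 : convex_body C -> C z0 -> g < dot n z0 ->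
  convex_body (C `&` [set x | g <= dot n x]).
Proof.
move=> [cC cv [z intz]] Cz0 gz0; split.
- apply: compact_closedI => //.
  apply: (@preimage_closed _ _ (dot n) [set r | g <= r]); last exact: closed_ge.
  by move=> x _; exact: dot_continuous.
- move=> a b t [Ca ha] [Cb hb] /[dup] t01 /andP [t0 t1]; split; first exact: cv.
  have h1 : 0 <= (1 - t) * (dot n a - g) by rewrite mulr_ge0 // subr_ge0.
  have h2 : 0 <= t * (dot n b - g) by rewrite mulr_ge0 // subr_ge0.
  by rewrite /= dotDr dotZr dotBr; lra.
set rho := dot n z0 - g; set del := dot n z - dot n z0.
have rho0 : 0 < rho by rewrite subr_gt0.
have rd0 : 0 < rho + `|del| by have := normr_ge0 del; lra.
set lam := rho / (rho + `|del|).
have lam01 : 0 < lam <= 1 by rewrite divr_gt0 //= ler_pdivrMr // mul1r lerDl.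
exists (z0 + scl lam (z - z0)); apply: filterI; first exact: nbhs_convex_shrink.
apply: (@filterS _ _ _ (dot n @^-1` [set r | g < r])); first by move=> x /ltW.
apply: open_nbhs_nbhs; split.
  by apply: open_comp; [move=> x _; exact: dot_continuous | exact: open_gt].
have small : lam * `|del| < rho by rewrite mulrAC ltr_pdivrMr // ltr_pM2l // ltrDr.
have : lam * - `|del| <= lam * del.
  by rewrite ler_wpM2l ?(ltW (andP lam01).1) // lerNl -normrN ler_norm.
by rewrite /= dotDr dotZr dotBr -/del; rewrite /rho in small; lra.
Qed.

Definition seg_sum C e := (fun xs : pt * R => xs.1 + scl xs.2 e) @` (C `*` `[0, 1]).

Lemma seg_sum_continuous e : continuous (fun xs : pt * R => xs.1 + scl xs.2 e).
Proof.
move=> xs.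
apply: (@cvg_pair _ _ _ _ (nbhs (xs.1.1 + xs.2 * e.1)) (nbhs (xs.1.2 + xs.2 * e.2))).
  apply: cvgD; last by apply: cvgMr_tmp; exact: cvg_snd.
  exact: (cvg_comp _ _ cvg_fst cvg_fst).
apply: cvgD; last by apply: cvgMr_tmp; exact: cvg_snd.
exact: (cvg_comp _ _ cvg_fst cvg_snd).
Qed.

Lemma seg_sum_sub C e : C `<=` seg_sum C e.
Proof.
move=> x Cx; exists (x, 0); first by split => //=; rewrite in_itv /= lexx ler01.
by apply: pt_ext; rewrite /scl /= mul0r addr0.
Qed.

Lemma seg_sum_body C e : convex_body C -> convex_body (seg_sum C e).
Proof.
move=> [cC cv [z intz]]; split.
- apply: continuous_compact; last exact: (compact_setX cC (@segment_compact R 0 1)).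
  apply: continuous_subspaceT; exact: seg_sum_continuous.
- move=> a b t [[c1 s1] [Cc1 s1i] <-] [[c2 s2] [Cc2 s2i] <-] /[dup] t01 /andP [t0 t1].
  exists (c1 + scl t (c2 - c1), s1 + t * (s2 - s1)).
    split; first exact: cv.
    move: s1i s2i; rewrite /= !in_itv /= => /andP [? ?] /andP [? ?].
    by apply/andP; split; nra.
  by apply: pt_ext; rewrite /scl /=; ring.
- by exists z; exact: (interiorS (@seg_sum_sub C e)).
Qed.

Lemma seg_sum_chord C e x1 x2 : seg_sum C e x1 -> seg_sum C e x2 ->
  exists c1 c2 (s : R), [/\ C c1, C c2, `|s| <= 1 & x2 - x1 = c2 - c1 + scl s e].
Proof.
move=> [[c1 s1] [Cc1 s1i] <-] [[c2 s2] [Cc2 s2i] <-].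
exists c1, c2, (s2 - s1); split => //.
  move: s1i s2i; rewrite /= !in_itv /= ler_norml => /andP [? ?] /andP [? ?].
  by apply/andP; split; lra.
by apply: pt_ext; rewrite /scl /=; ring.
Qed.

Lemma dot_extremes_lt y C p q : convex_body C -> y <> 0 ->
  (forall x, C x -> dot y q <= dot y x <= dot y p) -> dot y q < dot y p.
Proof.
move=> [_ _ [z intz]] y0 ext; have Cz := interior_subset intz.
have /nbhs_ptP [r r0 hr] := intz.
set S := `|y.1| + `|y.2| + 1.
have S0 : 0 < S by rewrite /S; have := normr_ge0 y.1; have := normr_ge0 y.2; lra.
set del := r / S.
have del0 : 0 < del by rewrite divr_gt0.
have delS : del * S = r by rewrite /del divfK // gt_eqF.
have Cz' : C (z + scl del y).
  by apply: hr; rewrite /scl /= addrAC subrr add0r normrM (gtr0_norm del0) -delS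
    ltr_pM2l // /S; have := normr_ge0 y.1; have := normr_ge0 y.2; lra.
have : 0 < del * dot y y by rewrite mulr_gt0 // dot_gt0.
have := ext _ Cz'; have := ext _ Cz; rewrite dotDr dotZr => /andP [? _] /andP [_ ?].
lra.
Qed.

Lemma convex_slope_bound (S : set (R * R)) s0 t0 s1 t1 : convex2 S ->
    (forall t, S (0, t) -> t <= 0) -> S (s0, t0) -> 0 < s0 -> S (s1, t1) -> s1 < 0 ->
  exists k, forall z, S z -> z.2 <= k * z.1.
Proof.
move=> cS axis S0 s0_gt0 S1 s1_lt0.
have slope_le z z' : S z -> S z' -> 0 < z.1 -> z'.1 < 0 -> z.2 / z.1 <= z'.2 / z'.1.
  move=> Sz Sz' z1_gt0 z'1_lt0.
  have gap : 0 < z.1 - z'.1 by rewrite subr_gt0 (lt_trans z'1_lt0).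
  set lam := - z'.1 / (z.1 - z'.1).
  have lam_gap : lam * (z.1 - z'.1) = - z'.1 by rewrite divfK ?gt_eqF.
  have lam01 : 0 <= lam <= 1.
    apply/andP; split; first by rewrite divr_ge0 ?oppr_ge0 // ltW.
    by rewrite ler_pdivrMr // mul1r; lra.
  have /axis on_axis : S (0, z'.2 + lam * (z.2 - z'.2)).
    have -> : (0, z'.2 + lam * (z.2 - z'.2)) = z' + scl lam (z - z').
      by apply: pt_ext; rewrite /scl //= lam_gap; ring.
    exact: cS.
  have : (z'.2 + lam * (z.2 - z'.2)) * (z.1 - z'.1) <= 0 by rewrite pmulr_lle0.
  rewrite mulrDl mulrAC lam_gap => h.
  by rewrite ler_pdivrMr // mulrAC ler_ndivlMr //; lra.
set P := [set z.2 / z.1 | z in [set z | S z /\ 0 < z.1]].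
have hsP : has_sup P.
  split; first by exists (t0 / s0), (s0, t0).
  by exists (t1 / s1) => _ [z [Sz z1_gt0] <-]; exact: (slope_le _ (s1, t1)).
exists (sup P) => z Sz; have [z1_lt0|z1_gt0|z1_eq0] := ltgtP z.1 0.
- rewrite -ler_ndivlMr //; apply: ge_sup; first by case: hsP.
  by move=> _ [z' [Sz' z'1_gt0] <-]; exact: slope_le.
- by rewrite -ler_pdivrMr //; apply: sup_upper_bound => //; exists z.
- rewrite z1_eq0 mulr0; apply: axis.
  by rewrite (_ : (0, z.2) = z) //; apply: pt_ext.
Qed.

Definition lattice_lengths (L : set pt) C :=
  [set l | exists a b, seg_in C a b /\ lattice_segment L a b l].

Section Lattice.
Variable L : set pt.
Hypothesis hL : is_lattice L.

Lemma lattice0 : L 0. Proof. by case: hL. Qed.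

Lemma latticeB x y : L x -> L y -> L (x - y). Proof. by case: hL => _ + _ _; apply. Qed.

Lemma latticeN x : L x -> L (- x).
Proof. by move=> Lx; rewrite -sub0r; apply: latticeB => //; exact: lattice0. Qed.

Lemma latticeD x y : L x -> L y -> L (x + y).
Proof. by move=> Lx Ly; rewrite -[y]opprK; apply: latticeB => //; exact: latticeN. Qed.

Lemma lattice_scl_nat (k : nat) x : L x -> L (scl k%:R x).
Proof.
move=> Lx; elim: k => [|k IH].
  by rewrite (_ : scl _ _ = 0); [exact: lattice0 | apply: pt_ext; rewrite /scl /= mul0r].
rewrite (_ : scl _ _ = scl k%:R x + x); first exact: latticeD.
by apply: pt_ext; rewrite /scl /= mulrSr mulrDl mul1r.
Qed.

Lemma lattice_scl_int (k : int) x : L x -> L (scl k%:~R x).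
Proof.
move=> Lx; case: k => k; first exact: lattice_scl_nat.
rewrite (_ : scl _ _ = - scl k.+1%:R x); first exact/latticeN/lattice_scl_nat.
by apply: pt_ext; rewrite /scl /= NegzE mulrNz mulNr.
Qed.

Section Basis.
Variables (u v : pt) (e : R).
Hypotheses (Lu : L u) (Lv : L v) (e0 : 0 < e).
Hypothesis discrete : forall x, L x -> enorm x < e -> x = 0.
Let d := u.1 * v.2 - u.2 * v.1.
Hypothesis d_neq0 : d != 0.

(* [alpha] and [beta] are the coordinates in the basis (u, v). *)
Let alpha z := (z.1 * v.2 - z.2 * v.1) / d.
Let beta z := (u.1 * z.2 - u.2 * z.1) / d.

Lemma basis_coord_small_eq0 : exists m : nat, forall z, L z ->
  `|alpha z| < m.+1%:R^-1 -> `|beta z| < m.+1%:R^-1 -> z = 0.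
Proof.
set K := `|u.1| + `|u.2| + (`|v.1| + `|v.2|).
exists (Num.truncn (K / e)); set M : R := _.+1%:R => z Lz za zb.
have M0 : 0 < M by rewrite ltr0n.
apply: discrete => //; apply: le_lt_trans (enorm_le_l1 z) _.
have zE : z = scl (alpha z) u + scl (beta z) v.
  by apply: pt_ext; rewrite /scl /alpha /beta /d /=; field.
have z1 : `|z.1| <= `|alpha z| * `|u.1| + `|beta z| * `|v.1|.
  by rewrite {1}zE -!normrM ler_normD.
have z2 : `|z.2| <= `|alpha z| * `|u.2| + `|beta z| * `|v.2|.
  by rewrite {1}zE -!normrM ler_normD.
have zK : `|z.1| + `|z.2| <= M^-1 * K.
  apply: le_trans (lerD z1 z2) _.
  rewrite addrACA -!mulrDr /K [leRHS]mulrDr.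
  by apply: lerD; apply: ler_wpM2r; rewrite ?addr_ge0 //; exact: ltW.
apply: le_lt_trans zK _; rewrite mulrC ltr_pdivrMr // mulrC -ltr_pdivrMr //.
exact: truncnS_gt.
Qed.

Lemma basis_coord_denominator : exists2 N : nat, (0 < N)%N &
  forall x, L x -> exists c : int, N%:R * alpha x = c%:~R.
Proof.
have [m small] := basis_coord_small_eq0.
exists (m.+1 * m.+1)`!; first exact: fact_gt0.
move=> x Lx.
have [n [c1 [c2 [/andP [n0 nM] ha hb]]]] := dirichlet_simultaneous (alpha x) (beta x) m.
pose z := scl n%:R x - scl c1%:~R u - scl c2%:~R v.
have Lz : L z by do 2?apply: latticeB; apply: lattice_scl_int || apply: lattice_scl_nat.
have az : alpha z = n%:R * alpha x - c1%:~R by rewrite /alpha /z /scl /d /=; field.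
have bz : beta z = n%:R * beta x - c2%:~R by rewrite /beta /z /scl /d /=; field.
have /eqP : alpha z = 0 by rewrite (small z) // ?az ?bz // /alpha /= !mul0r subrr mul0r.
rewrite az subr_eq0 => /eqP nx.
have [k ->] : exists k, ((m.+1 * m.+1)`! = k * n)%N.
  by exists ((m.+1 * m.+1)`! %/ n)%N; rewrite divnK // dvdn_fact // n0.
by exists (k%:Z * c1); rewrite natrM -mulrA nx rmorphM.
Qed.

Lemma basis_dual_neq0 : exists y, dual_lattice L y /\ y <> 0.
Proof.
have [N N0 hN] := basis_coord_denominator.
exists (scl N%:R (v.2 / d, - v.1 / d)); split.
  by move=> x /hN [c hc]; exists c; rewrite -hc /dot /scl /alpha /=; field.
move=> /(congr1 (dot u)).
have -> : dot u (scl N%:R (v.2 / d, - v.1 / d)) = N%:R by rewrite /dot /scl /d /=; field.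
by rewrite /dot /= !mulr0 addr0 => /eqP; rewrite pnatr_eq0 gtn_eqF.
Qed.

End Basis.

Lemma dual_lattice_neq0 : exists y, dual_lattice L y /\ y <> 0.
Proof.
case: hL => _ _ [e e0 discrete] [u [v [Lu Lv d_neq0]]].
exact: basis_dual_neq0 Lu Lv e0 discrete d_neq0.
Qed.

Lemma lattice_width_ge C r :
  (forall y, dual_lattice L y -> y <> 0 -> r <= dir_width y C) -> r <= lattice_width L C.
Proof.
move=> H; apply: lb_le_inf; last by move=> _ [y [dy y0] <-]; exact: H.
by have [y [dy y0]] := dual_lattice_neq0; exists (dir_width y C), y.
Qed.

Lemma lattice_width_le C y : compact C -> C !=set0 -> dual_lattice L y -> y <> 0 ->
  lattice_width L C <= dir_width y C.
Proof.
move=> cC C0 dy y0; apply: ge_inf; last by exists y.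
by exists 0 => _ [y' _ <-]; exact: dir_width_ge0.
Qed.

Lemma lattice_width_ge0 C : compact C -> C !=set0 -> 0 <= lattice_width L C.
Proof. by move=> cC C0; apply: lattice_width_ge => y _ _; exact: dir_width_ge0. Qed.

Lemma lattice_width_lt C r : lattice_width L C < r ->
  exists y, [/\ dual_lattice L y, y <> 0 & dir_width y C < r].
Proof.
move=> Wr; apply: contrapT => none; move: Wr; apply/negP; rewrite -leNgt.
apply: lattice_width_ge => y dy y0; rewrite leNgt; apply/negP => yr.
by apply: none; exists y.
Qed.

Lemma prim_gen_multiple w v z : prim_gen L w v -> L z -> (exists s, z = scl s v) ->
  exists k : int, z = scl k%:~R v.
Proof.
case=> _ _ [t _ vt] prim Lz [s zs]; apply: prim => //.
by exists (s * t); rewrite zs vt; apply: pt_ext; rewrite /scl /=; ring.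
Qed.

Lemma lattice_segment_scl w v a b (T : R) : prim_gen L w v -> 0 < T -> b - a = scl T v ->
  lattice_segment L a b T.
Proof.
move=> pg T0 baT; have [Lv v0 _ _] := pg.
have ev0 := enorm_gt0 v0.
have ba_gt0 : 0 < enorm (b - a) by rewrite baT enormZ ?ltW // mulr_gt0.
split.
  apply/eqP => ab; move: ba_gt0; rewrite ab subrr /enorm /dot /= !mulr0 addr0.
  by rewrite sqrtr0 ltxx.
exists v; split; last by rewrite baT enormZ ?ltW // mulfK // gt_eqF.
split => //.
  exists T^-1; first by rewrite invr_gt0.
  by rewrite baT; apply: pt_ext; rewrite /scl /= mulrA mulVf ?mul1r // gt_eqF.
move=> z Lz [s zs]; apply: prim_gen_multiple pg Lz _.
by exists (s * T); rewrite zs baT; apply: pt_ext; rewrite /scl /=; ring.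
Qed.

Lemma lattice_segment_dir a b l : lattice_segment L a b l ->
  exists v, [/\ prim_gen L (b - a) v, 0 < l & b - a = scl l v].
Proof.
case=> ab [v [pg ->]]; have [_ v0 [t t0 vt] _] := pg.
have ba0 : b - a <> 0 by move/eqP; rewrite subr_eq0 eq_sym; apply/negP.
have eba_neq0 := lt0r_neq0 (enorm_gt0 ba0); have t_neq0 := lt0r_neq0 t0.
exists v; split => //; first by rewrite divr_gt0 ?enorm_gt0.
by rewrite vt enormZ ?ltW //; apply: pt_ext; rewrite /scl /=; field; apply/andP.
Qed.

Lemma long_segment_perp C a b v l y : compact C -> seg_in C a b -> L v ->
  b - a = scl l v -> 0 < l -> dual_lattice L y -> dir_width y C < l -> dot y v = 0.
Proof.
move=> cC sab Lv bav l0 dy yl; have [Ca Cb] := seg_in_ends sab.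
have [k kE] := dy v Lv; rewrite dotC kE; apply/eqP; rewrite intr_eq0.
apply: contraTT yl => k0; rewrite -leNgt (le_trans _ (dir_width_norm y cC Ca Cb)) //.
rewrite bav dotZr dotC kE normrM (gtr0_norm l0).
by apply: ler_peMr; [exact: ltW | exact: intr_norm_ge1].
Qed.

Lemma long_segment_narrow_dir C : convex_body C -> has_sup (lattice_lengths L C) ->
    lattice_width L C < lattice_diam L C ->
  exists a b v l y, [/\ seg_in C a b, prim_gen L (b - a) v, b - a = scl l v,
    lattice_width L C < l & [/\ dual_lattice L y, y <> 0, dot y v = 0 & dir_width y C < l]].
Proof.
move=> [cC _ _] hs WD.
have [l [a [b [sab seg]]] Wl] : exists2 l, lattice_lengths L C l & lattice_width L C < l.
  apply: contrapT => none; move: WD; apply/negP; rewrite -leNgt.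
  apply: ge_sup; first by case: hs.
  by move=> l Sl; rewrite leNgt; apply/negP => Wl; apply: none; exists l.
have [y [dy y0 yl]] := lattice_width_lt Wl.
have [v [pg l0 bav]] := lattice_segment_dir seg; have [Lv _ _ _] := pg.
exists a, b, v, l, y; split => //; split => //.
exact: long_segment_perp cC sab Lv bav l0 dy yl.
Qed.

End Lattice.

Section Reduced.
Variables (L C : set pt) (y p q : pt).
Hypotheses (hL : is_lattice L) (hC : convex_body C) (Cp : C p) (Cq : C q).
Hypothesis ext : forall x, C x -> dot y q <= dot y x <= dot y p.
Hypothesis y0 : y <> 0.

Lemma lattice_width_sub_eq C' v a1 b1 (l1 : R) : compact C' -> C' `<=` C -> C' p -> C' q ->
    L v -> v <> 0 -> dot y v = 0 -> C' a1 -> C' b1 -> b1 - a1 = scl l1 v ->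
    lattice_width L C < l1 ->
  lattice_width L C' = lattice_width L C.
Proof.
move=> cC' sC' C'p C'q Lv v0 yv C'a1 C'b1 bal1 Wl1; have [cC _ _] := hC.
have C'0 : C' !=set0 by exists p.
have ext' x : C' x -> dot y q <= dot y x <= dot y p by move/sC'; exact: ext.
apply/le_anti/andP; split.
  apply: (lattice_width_ge hL) => y' dy' y'0.
  exact: le_trans (lattice_width_le cC' C'0 dy' y'0) (dir_width_subset y' cC sC' C'0).
apply: (lattice_width_ge hL) => y' dy' y'0; have [k kE] := dy' v Lv.
have [k0|k0] := eqVneq k 0.
  have vy' : dot v y' = 0 by rewrite kE k0.
  set mu := dot y y' / dot y y.
  have y'E : y' = scl mu y := perp_colinear v0 vy' (etrans (dotC v y) yv) y0.
  rewrite [in X in _ <= X]y'E (dir_width_sclE mu C'p C'q ext').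
  rewrite -(dir_width_sclE mu Cp Cq ext) -y'E.
  exact: lattice_width_le cC (ex_intro _ p Cp) dy' y'0.
apply/ltW/(lt_le_trans Wl1)/(le_trans (ler_norm l1)).
apply: le_trans (dir_width_norm y' cC' C'a1 C'b1).
rewrite bal1 dotZr dotC kE normrM.
by apply: ler_peMr; [exact: normr_ge0 | exact: intr_norm_ge1].
Qed.

Lemma halfplane_cut_not_reduced n (g : R) v o a1 b1 (l1 : R) :
    L v -> v <> 0 -> dot y v = 0 -> C o -> dot n o < g ->
    C a1 -> g < dot n a1 -> C b1 -> g <= dot n b1 -> g <= dot n p -> g <= dot n q ->
    b1 - a1 = scl l1 v -> lattice_width L C < l1 ->
  ~ lattice_reduced L C.
Proof.
move=> Lv v0 yv Co no Ca1 na1 Cb1 nb1 np nq bal1 Wl1 hred.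
have bodyC' := halfplane_body hC Ca1 na1; have [cC' _ _] := bodyC'.
have sub : C `&` [set x | g <= dot n x] `<=` C by move=> x [].
apply: hred; exists (C `&` [set x | g <= dot n x]); split.
- exact: bodyC'.
- by split => // /(_ o Co) [_ /=]; rewrite leNgt no.
apply: (lattice_width_sub_eq cC' sub _ _ Lv v0 yv _ _ bal1 Wl1); split => //.
exact: ltW.
Qed.

Lemma cut_off_segment_end n v a b l : L v -> v <> 0 -> dot y v = 0 ->
    seg_in C a b -> b - a = scl l v -> lattice_width L C < l -> dot n a < dot n b ->
    (dot n a + dot n b) / 2 <= dot n p -> (dot n a + dot n b) / 2 <= dot n q ->
  ~ lattice_reduced L C.
Proof.
move=> Lv v0 yv sab bal Wl nab np nq; have [cC _ _] := hC.
have [Ca Cb] := seg_in_ends sab.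
set W := lattice_width L C in Wl.
have W0 : 0 <= W := lattice_width_ge0 hL cC (convex_body_neq0 hC).
have l0 : 0 < l := le_lt_trans W0 Wl.
set s := dot n b - dot n a.
have s0 : 0 < s by rewrite subr_gt0.
have sE : s = dot n b - dot n a by [].
set del := (l - W) / (2 * l).
have del0 : 0 < del by rewrite divr_gt0 ?mulr_gt0 // subr_gt0.
have del_l : del * l = (l - W) / 2 by rewrite /del; field; rewrite gt_eqF.
have del1 : del <= 1 by rewrite /del ler_pdivrMr ?mulr_gt0 // mul1r; lra.
have dels0 : 0 < del * s := mulr_gt0 del0 s0.
have dels1 : del * s <= s := ler_piMl (ltW s0) del1.
set a' := a + scl del (b - a).
have Ca' : C a' by apply: sab; rewrite (ltW del0) del1.
have na' : dot n a' = dot n a + del * s by rewrite /a' dotDr dotZr dotBr.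
have ba' : b - a' = scl ((1 - del) * l) v.
  have bE : b = a + scl l v by rewrite -bal addrC subrK.
  by rewrite /a' bE; apply: pt_ext; rewrite /scl /=; ring.
apply: (@halfplane_cut_not_reduced n (dot n a + del * s / 2) v a a' b ((1 - del) * l))
  => //; rewrite ?na' ?mulrBl ?mul1r ?del_l; lra.
Qed.

Hypothesis pq : dot y q < dot y p.

Lemma long_perp_segment_not_reduced v a b l : L v -> v <> 0 -> dot y v = 0 ->
  seg_in C a b -> b - a = scl l v -> lattice_width L C < l -> ~ lattice_reduced L C.
Proof.
move=> Lv v0 yv sab bal Wl; have [cC _ _] := hC.
have l0 : 0 < l := le_lt_trans (lattice_width_ge0 hL cC (convex_body_neq0 hC)) Wl.
(* a normal to [q - p] which is not orthogonal to [v] *)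
pose n := scl (dot y (p - q)) v - scl (dot v (p - q)) y.
have npq : dot n p = dot n q.
  by apply/eqP; rewrite -subr_eq0 -dotBr /n /dot /scl /=; apply/eqP; ring.
have nab : dot n a < dot n b.
  rewrite -subr_gt0 -dotBr bal dotZr mulr_gt0 // dotC /n dotBr !dotZr.
  by rewrite [dot v y]dotC yv mulr0 subr0 mulr_gt0 ?dot_gt0 // dotBr subr_gt0.
have [mid|mid] := leP ((dot n a + dot n b) / 2) (dot n p).
  by apply: (cut_off_segment_end Lv v0 yv sab bal Wl nab mid); rewrite -npq.
apply: (@cut_off_segment_end (- n) (- v) b a l) => //; rewrite ?dotNl.
- exact: latticeN.
- by move=> /eqP; rewrite oppr_eq0 => /eqP.
- by rewrite dotNr yv oppr0.
- exact: seg_in_sym.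
- by rewrite -opprB bal; apply: pt_ext; rewrite /scl /=; ring.
- by rewrite ltrN2.
- by lra.
- by rewrite -npq; lra.
Qed.

End Reduced.

Section Complete.
Variables (L C : set pt) (y p q v w : pt).
Hypotheses (hC : convex_body C) (Cp : C p) (Cq : C q).
Hypothesis ext : forall x, C x -> dot y q <= dot y x <= dot y p.
Hypothesis pq : dot y q < dot y p.
Hypotheses (dy : dual_lattice L y) (y0 : y <> 0) (pg : prim_gen L w v) (yv : dot y v = 0).
Hypothesis hs : has_sup (lattice_lengths L C).

Lemma perp_chord_le_diam c1 c2 : C c1 -> C c2 -> dot y (c2 - c1) = 0 ->
  dot v (c2 - c1) <= lattice_diam L C * dot v v.
Proof.
move=> C1 C2 yc; have [_ v0 _ _] := pg; have [_ cv _] := hC.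
set T := dot v (c2 - c1) / dot v v.
have cE : c2 - c1 = scl T v := perp_colinear y0 yc yv v0.
rewrite {1}cE dotZr ler_pM2r ?dot_gt0 //.
have [T0|T0] := leP T 0; last first.
  apply: sup_upper_bound => //; exists c1, c2; split; last exact: lattice_segment_scl pg T0 cE.
  by move=> t; exact: cv.
apply: le_trans T0 _; have [[l [a [b [sab seg]]]] _] := hs.
have [_ [_ l0 _]] := lattice_segment_dir seg.
by apply: le_trans (ltW l0) _; apply: sup_upper_bound => //; exists a, b; split.
Qed.

Lemma chord_slope_bound : exists k, forall c1 c2, C c1 -> C c2 ->
  dot v (c2 - c1) - k * dot y (c2 - c1) <= lattice_diam L C * dot v v.
Proof.
pose S := [set (dot y (c2 - c1), dot v (c2 - c1) - lattice_diam L C * dot v v)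
  | c1 in C & c2 in C].
have cS : convex2 S.
  move=> _ _ t [c1 C1 [c2 C2 <-]] [c3 C3 [c4 C4 <-]] t01; have [_ cv _] := hC.
  exists (c1 + scl t (c3 - c1)); first exact: cv.
  exists (c2 + scl t (c4 - c2)); first exact: cv.
  by apply: pt_ext; rewrite /dot /scl /=; ring.
have axis t : S (0, t) -> t <= 0.
  by move=> [c1 C1 [c2 C2 [yc <-]]]; rewrite subr_le0; exact: perp_chord_le_diam.
have Spq : S (dot y (p - q), dot v (p - q) - lattice_diam L C * dot v v).
  by exists q => //; exists p.
have Sqp : S (dot y (q - p), dot v (q - p) - lattice_diam L C * dot v v).
  by exists p => //; exists q.
have ypq : 0 < dot y (p - q) by rewrite dotBr subr_gt0.
have yqp : dot y (q - p) < 0 by rewrite dotBr subr_lt0.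
have [k hk] := convex_slope_bound cS axis Spq ypq Sqp yqp.
exists k => c1 c2 C1 C2.
have /hk /= : S (dot y (c2 - c1), dot v (c2 - c1) - lattice_diam L C * dot v v).
  by exists c1 => //; exists c2.
lra.
Qed.

(* [F x := dot v x - k * dot y x] vanishes on [e], so [F] of a chord of [seg_sum C e]
   is [F] of a chord of [C]. *)
Lemma seg_sum_lengths_le (k d : R) e :
    (forall c1 c2, C c1 -> C c2 -> dot v (c2 - c1) - k * dot y (c2 - c1) <= d * dot v v) ->
    dot v e = k * dot y e -> dir_width y C + `|dot y e| < d ->
  forall l, lattice_lengths L (seg_sum C e) l -> l <= d.
Proof.
move=> kb ve wd l [a2 [b2 [sab2 seg2]]]; have [cC _ _] := hC; have [_ v0 _ _] := pg.
have [v1 [pg1 l0 bal]] := lattice_segment_dir seg2; have [Lv1 v10 _ _] := pg1.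
have [Sa2 Sb2] := seg_in_ends sab2.
have [c1 [c2 [s [C1 C2 s1 chord]]]] := seg_sum_chord Sa2 Sb2.
have [k1 k1E] := dy Lv1.
have [k10|k10] := eqVneq k1 0; last first.
  have hyd : `|dot y (b2 - a2)| <= `|dot y (c2 - c1)| + `|s| * `|dot y e|.
    by rewrite chord dotDr dotZr -normrM ler_normD.
  have := dir_width_norm y cC C1 C2; have := ler_piMl (normr_ge0 (dot y e)) s1.
  have : l <= `|dot y (b2 - a2)|.
    rewrite bal dotZr dotC k1E normrM (gtr0_norm l0).
    by apply: ler_peMr; [exact: ltW | exact: intr_norm_ge1].
  lra.
have yv1 : dot y v1 = 0 by rewrite dotC k1E k10.
have [k' v1E] := prim_gen_multiple pg Lv1 (ex_intro _ _ (perp_colinear y0 yv1 yv v0)).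
have k'0 : k' != 0.
  apply: contra_notN v10 => /eqP k'0.
  by rewrite v1E k'0; apply: pt_ext; rewrite /scl /= mul0r.
have Fchord : dot v (b2 - a2) - k * dot y (b2 - a2) = dot v (c2 - c1) - k * dot y (c2 - c1).
  by rewrite chord !dotDr !dotZr ve; ring.
have Fseg : dot v (b2 - a2) - k * dot y (b2 - a2) = l * k'%:~R * dot v v.
  by rewrite bal v1E !dotZr yv; ring.
have Fswap : dot v (c1 - c2) - k * dot y (c1 - c2) = - (dot v (c2 - c1) - k * dot y (c2 - c1)).
  by rewrite -[c1 - c2]opprB !dotNr; ring.
have up : l * k'%:~R <= d.
  by rewrite -(ler_pM2r (dot_gt0 v0)) -Fseg Fchord kb.
have down : - (l * k'%:~R) <= d.
  by rewrite -(ler_pM2r (dot_gt0 v0)) mulNr -Fseg Fchord -Fswap kb.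
have lk'd : `|l * k'%:~R| <= d by rewrite ler_norml up andbT lerNl.
apply: le_trans lk'd.
rewrite normrM (gtr0_norm l0).
by apply: ler_peMr; [exact: ltW | exact: intr_norm_ge1].
Qed.

Lemma narrow_perp_dir_not_complete : dir_width y C < lattice_diam L C ->
  ~ lattice_complete L C.
Proof.
move=> wD hcomp; have [_ v0 _ _] := pg.
have vv0 := lt0r_neq0 (dot_gt0 v0); have yy0 := lt0r_neq0 (dot_gt0 y0).
have [k kb] := chord_slope_bound.
set eps := (lattice_diam L C - dir_width y C) / 2.
have eps0 : 0 < eps by rewrite divr_gt0 // subr_gt0.
set e := scl eps (scl (k / dot v v) v + scl (dot y y)^-1 y).
have ye : dot y e = eps by rewrite dotZr dotDr !dotZr yv mulr0 add0r mulVf ?mulr1.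
have ve : dot v e = k * dot y e.
  by rewrite ye dotZr dotDr !dotZr [dot v y]dotC yv mulr0 addr0 divfK // mulrC.
have wd : dir_width y C + `|dot y e| < lattice_diam L C by rewrite ye gtr0_norm // /eps; lra.
have le_D := seg_sum_lengths_le kb ve wd.
have lengths_sub : lattice_lengths L C `<=` lattice_lengths L (seg_sum C e).
  by move=> l [a [b [sab seg]]]; exists a, b; split => // t /sab /seg_sum_sub.
apply: hcomp; exists (seg_sum C e); split; first exact: seg_sum_body.
  split; first exact: seg_sum_sub.
  have Spe : seg_sum C e (p + e).
    exists (p, 1); first by split => //=; rewrite in_itv /= ler01 lexx.
    by apply: pt_ext; rewrite /scl /= !mul1r.
  by move=> /(_ _ Spe) /ext /andP [_]; rewrite dotDr ye; lra.
have [[l Sl] _] := hs.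
have Sl' : lattice_lengths L (seg_sum C e) l by exact: lengths_sub.
apply/le_anti/andP; split; first by apply: ge_sup; [exists l | exact: le_D].
apply: sup_le; first by move=> x /lengths_sub /le_down.
  by exists l.
by split; [exists l | exists (lattice_diam L C); exact: le_D].
Qed.

End Complete.

End Plane.

Theorem proposition5p1 (R : realType) (L C : set (R * R)%type) :
  is_lattice L -> convex_body C ->
  lattice_reduced L C \/ lattice_complete L C ->
  lattice_diam L C <= lattice_width L C.
Proof.
move=> hL hC hRC; have [cC _ _] := hC; have C0 := convex_body_neq0 hC.
have W0 := lattice_width_ge0 hL cC C0.
have [hs|unbounded] := pselect (has_sup (lattice_lengths L C)); last first.
  by rewrite /lattice_diam sup_out.
rewrite leNgt; apply/negP => WD.
have [a [b [v [l [y [sab pg bav Wl [dy y0 yv yl]]]]]]] := long_segment_narrow_dir hL hC hs WD.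
have [p [q [Cp Cq ext]]] := dot_extremes y cC C0.
have pq := dot_extremes_lt hC y0 ext.
have [Lv v0 _ _] := pg.
case: hRC => [hred | hcomp].
  exact: (long_perp_segment_not_reduced hL hC Cp Cq ext y0 pq Lv v0 yv sab bav Wl).
have l_le_D : l <= lattice_diam L C.
  apply: sup_upper_bound => //; exists a, b; split => //.
  exact: lattice_segment_scl pg (le_lt_trans W0 Wl) bav.
exact: (narrow_perp_dir_not_complete hC Cp Cq ext pq dy y0 pg yv hs (lt_le_trans yl l_le_D)).
Qed.
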